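(* Let $\Gamma$ be an orthosymmetric, convex, compact set, $\epsilon>0$, and $d=D_{\mathsf c}(\Gamma,\epsilon)-1\ge1$. Then there exist pairwise orthogonal vectors $\mathbf u_1,\dots,\mathbf u_{\lfloor d/2\rfloor}\in\Gamma$ such that $\|\mathbf u_i\|\ge\epsilon/\sqrt d$ for every $1\le i\le\lfloor d/2\rfloor$.
   Context: Orthosymmetric: closed under flipping signs of any coordinates. Coordinate-wise Kolmogorov dimension $D_{\mathsf c}(\Gamma,\epsilon)$: the smallest integer $k$ such that some set $A$ of $k$ coordinate indices satisfies $\sup_{\boldsymbol\theta\in\Gamma}\sum_{i\notin A}\theta_i^2\le\epsilon^2$. *)

From HB Require Import structures.
From mathcomp Require Import all_boot all_order all_algebra.
From mathcomp Require Import all_classical all_reals all_analysis.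
Set Implicit Arguments. Unset Strict Implicit. Unset Printing Implicit Defensive.
Import Order.TTheory GRing.Theory Num.Theory.
Import numFieldNormedType.Exports.
Local Open Scope classical_set_scope.
Local Open Scope ring_scope.

Definition dotv {R : realType} {n : nat} (x y : 'rV[R]_n) : R :=
  \sum_(i < n) x 0 i * y 0 i.
Definition enorm {R : realType} {n : nat} (x : 'rV[R]_n) : R :=
  Num.sqrt (dotv x x).

Definition orthosymmetric {R : realType} {n : nat} (G : set 'rV[R]_n) : Prop :=
  forall (x : 'rV[R]_n) (s : {set 'I_n}), G x ->
    G (\row_i (if i \in s then - x 0 i else x 0 i)).

Definition convexR {R : realType} {n : nat} (G : set 'rV[R]_n) : Prop :=
  forall (x y : 'rV[R]_n) (t : R), G x -> G y -> 0 <= t -> t <= 1 ->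
    G (t *: x + (1 - t) *: y).

Definition coord_ok {R : realType} {n : nat} (G : set 'rV[R]_n) (eps : R)
  (k : nat) : Prop :=
  exists A : {set 'I_n}, #|A| = k /\
    forall th : 'rV[R]_n, G th -> \sum_(i in ~: A) th 0 i ^+ 2 <= eps ^+ 2.

Lemma coord_ok_ex {R : realType} {n : nat} (G : set 'rV[R]_n) (eps : R) :
  exists k, `[< coord_ok G eps k >].
Proof.
exists n; apply/asboolP; exists [set: 'I_n]%SET; split; first by rewrite cardsT card_ord.
by move=> th _; rewrite big1 ?sqr_ge0 // => i; rewrite !inE.
Qed.

Definition Dc {R : realType} {n : nat} (G : set 'rV[R]_n) (eps : R) : nat :=
  ex_minn (coord_ok_ex G eps).

From HB Require Import structures.
From mathcomp Require Import all_boot all_order all_algebra.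
From mathcomp Require Import all_classical all_reals all_analysis.
From mathcomp Require Import zify lra.
Import Order.TTheory GRing.Theory Num.Theory.
Import numFieldNormedType.Exports.
Set Implicit Arguments.
Unset Strict Implicit.
Unset Printing Implicit Defensive.
Local Open Scope ring_scope.

(** Put c := eps^2 / d and call a set S of coordinates heavy when some point
    of G has square mass at least c on S.  Greedily remove from the index set
    either a heavy singleton, which is put into an exceptional set B, or a
    minimal heavy set; on a minimal heavy set every point of G has mass below
    2c, since it is the union of a singleton and a proper subset, neither of
    them heavy.  If the greedy procedure stops after m steps, every point of G
    has mass below (2m + 1) c outside B, and |B| <= m.  Were m < d/2, this
    would make B a witness of D_c(G, eps) <= m < d + 1.  Hence there are at
    least d/2 disjoint heavy sets, and since G, being orthosymmetric and
    convex, contains the restriction of each of its points to any set of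
    coordinates, it contains d/2 vectors with disjoint supports and squared
    norm at least c. *)

Lemma disjoint_nth (T : finType) (L : seq {set T}) i j :
  pairwise (fun A B : {set T} => [disjoint A & B]) L ->
  (i < size L)%N -> (j < size L)%N -> i != j ->
  [disjoint nth finset.set0 L i & nth finset.set0 L j].
Proof.
move=> /(pairwiseP finset.set0) disjL iL jL.
by rewrite neq_ltn => /orP[] ij; [|rewrite disjoint_sym]; apply: disjL.
Qed.

Section SquareMass.
Variables (R : realType) (n : nat).
Implicit Types (th : 'rV[R]_n) (A B S T U X : {set 'I_n}).

Definition sqnorm_on th S : R := \sum_(i in S) th 0 i ^+ 2.

Lemma sqnorm_on0 th : sqnorm_on th finset.set0 = 0.
Proof. by rewrite /sqnorm_on big_set0. Qed.

Lemma sqnorm_on_subU th {A S T} :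
  A \subset S :|: T -> sqnorm_on th A <= sqnorm_on th S + sqnorm_on th T.
Proof.
move=> sA; rewrite /sqnorm_on !(big_mkcond (fun i => i \in _)) -big_split.
apply: ler_sum => i _; have := fintype.subsetP sA i; rewrite inE.
have := sqr_ge0 (th 0 i).
by case: (i \in A); case: (i \in S); case: (i \in T) => //= *; lra.
Qed.

Definition row_restrict S th : 'rV[R]_n :=
  \row_j (if j \in S then th 0 j else 0).

Lemma dotv_row_restrict S th :
  dotv (row_restrict S th) (row_restrict S th) = sqnorm_on th S.
Proof.
rewrite /dotv /sqnorm_on (big_mkcond (fun j => j \in S)).
by apply: eq_bigr => j _; rewrite mxE; case: ifP; rewrite ?mulr0.
Qed.

Lemma dotv_row_restrict_disjoint S T x y : [disjoint S & T] ->
  dotv (row_restrict S x) (row_restrict T y) = 0.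
Proof.
move=> ST; rewrite /dotv big1 // => j _; rewrite !mxE.
by case: (boolP (j \in S)) => [/(disjointFr ST) -> | _]; rewrite ?mulr0 ?mul0r.
Qed.

(* The restriction to S is the midpoint of th and th with the coordinates
   outside S negated. *)
Lemma row_restrict_mem (G : set 'rV[R]_n) S th :
  orthosymmetric G -> convexR G -> G th -> G (row_restrict S th).
Proof.
move=> osG cvG Gth.
have half_ge0 : 0 <= 2^-1 :> R by rewrite invr_ge0 ler0n.
have half_le1 : 2^-1 <= 1 :> R by rewrite invf_le1 ?ler1n ?ltr0n.
have := cvG _ _ _ Gth (osG th (~: S) Gth) half_ge0 half_le1.
congr G; apply/rowP => j; rewrite !mxE inE.
have half2 : 1 - 2^-1 = 2^-1 :> R by lra.
by rewrite half2; case: (j \in S) => /=; lra.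
Qed.

Lemma enorm_ge (x : 'rV[R]_n) (a : R) :
  0 <= a -> a ^+ 2 <= dotv x x -> a <= enorm x.
Proof.
move=> a_ge0 ax; rewrite /enorm -(ger0_norm a_ge0) -sqrtr_sqr ler_sqrt //.
exact: le_trans (sqr_ge0 a) ax.
Qed.

Section HeavySets.
Variables (G : set 'rV[R]_n) (c : R).
Hypothesis c_gt0 : 0 < c.

Definition heavy S := exists2 th, G th & c <= sqnorm_on th S.

Lemma not_heavy S : ~ heavy S -> forall th, G th -> sqnorm_on th S < c.
Proof.
by move=> hS th Gth; rewrite ltNge; apply/negP => cS; apply: hS; exists th.
Qed.

Lemma heavy_neq0 {S} : heavy S -> S != finset.set0.
Proof.
by case=> th _; apply: contraTneq => ->; rewrite sqnorm_on0 -ltNge.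
Qed.

Lemma minset_heavyD1 S :
  minset (fun A => `[< heavy A >]) S -> forall x, x \in S -> ~ heavy (S :\ x).
Proof.
move=> /minsetP[_ minS] x xS hSx.
have /setP/(_ x) := minS _ (asboolT hSx) (subD1set S x).
by rewrite !inE eqxx xS.
Qed.

(* S is a heavy singleton of U with X = S if there is one, and otherwise a
   minimal heavy subset of U with X empty. *)
Lemma heavy_block {U} : heavy U -> exists S X,
  [/\ S \subset U, heavy S, (#|X| <= 1)%N &
      forall th, G th -> sqnorm_on th (S :\: X) < c *+ 2].
Proof.
move=> hU; case: (pselect (exists2 x, x \in U & heavy [set x])).
  move=> [x xU hx]; exists [set x], [set x].
  rewrite finset.sub1set cards1 finset.setDv; split=> // th _.
  by rewrite sqnorm_on0 pmulrn_lgt0.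
move=> no_heavy1.
have [S minS sSU] := minset_exists (P := fun A => `[< heavy A >]) (asboolT hU).
have hS : heavy S by have /minsetP[/asboolP] := minS.
have /set0Pn[x xS] := heavy_neq0 hS.
exists S, finset.set0; rewrite cards0 finset.setD0; split=> // th Gth.
have sS : S \subset [set x] :|: S :\ x by rewrite finset.setD1K.
apply: le_lt_trans (sqnorm_on_subU th sS) _; rewrite mulr2n.
apply: ltrD; apply: not_heavy Gth; last exact: minset_heavyD1.
by move=> hx; apply: no_heavy1; exists x => //; apply: fintype.subsetP xS.
Qed.

Lemma heavy_packing U : exists (L : seq {set 'I_n}) B,
  [/\ {in L, forall S, S \subset U /\ heavy S},
      pairwise (fun S T : {set 'I_n} => [disjoint S & T]) L,
      (#|B| <= size L)%N &
      forall th, G th -> sqnorm_on th (U :\: B) < c *+ (size L).*2.+1].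
Proof.
have [k] := ubnP #|U|; elim: k U => // k IH U; rewrite ltnS => cardU.
case: (pselect (heavy U)) => [hU | nhU]; last first.
  exists [::], finset.set0; rewrite cards0 finset.setD0.
  by split=> // th Gth; apply: not_heavy.
have [S [X [sSU hS cardX lightS]]] := heavy_block hU.
have [|L [B [hL disjL cardB lightU]]] := IH (U :\: S).
  have := subset_leq_card sSU; have := heavy_neq0 hS.
  rewrite cardsD (finset.setIidPr sSU) -card_gt0; lia.
exists (S :: L), (X :|: B); split.
- move=> T; rewrite inE => /predU1P[-> // | TL].
  have [sTU hT] := hL T TL; split=> //.
  exact: fintype.subset_trans sTU (subsetDl U S).
- rewrite pairwise_cons disjL andbT; apply/allP => T TL.
  rewrite disjoint_sym finset.disjoints_subset.
  apply: fintype.subset_trans (proj1 (hL T TL)) _.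
  by rewrite finset.setDE subsetIr.
- by rewrite cardsU /= -add1n (leq_trans (leq_subr _ _)) ?leq_add.
- move=> th Gth.
  have sU : U :\: (X :|: B) \subset (S :\: X) :|: ((U :\: S) :\: B).
    apply/fintype.subsetP => y; rewrite !inE.
    by case: (y \in S); case: (y \in X); case: (y \in B).
  apply: le_lt_trans (sqnorm_on_subU th sU) _.
  have -> : ((size L).+1).*2.+1 = (2 + (size L).*2.+1)%N by lia.
  by rewrite mulrnDr ltrD ?lightS ?lightU.
Qed.

End HeavySets.

Lemma orthogonal_restrictions (G : set 'rV[R]_n) c (L : seq {set 'I_n}) k :
  orthosymmetric G -> convexR G -> {in L, forall S, heavy G c S} ->
  pairwise (fun S T : {set 'I_n} => [disjoint S & T]) L -> (k <= size L)%N ->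
  exists u : 'I_k -> 'rV[R]_n,
    [/\ forall i, G (u i), forall i j, i != j -> dotv (u i) (u j) = 0 &
        forall i, c <= dotv (u i) (u i)].
Proof.
move=> osG cvG hL disjL kL.
pose S (i : 'I_k) := nth finset.set0 L i.
have iL (i : 'I_k) : (i < size L)%N := leq_trans (ltn_ord i) kL.
have [th thP] : {th : 'I_k -> 'rV[R]_n &
    forall i, G (th i) /\ c <= sqnorm_on (th i) (S i)}.
  apply: (@choice _ _ (fun i t => G t /\ c <= sqnorm_on t (S i))) => i.
  by have [t] := hL (S i) (mem_nth _ (iL i)); exists t.
exists (fun i => row_restrict (S i) (th i)); split.
- by move=> i; apply: row_restrict_mem; case: (thP i).
- by move=> i j ij; apply/dotv_row_restrict_disjoint/disjoint_nth.
- by move=> i; rewrite dotv_row_restrict; case: (thP i).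
Qed.

End SquareMass.

Lemma Dc_le (R : realType) (n : nat) (G : set 'rV[R]_n) (eps : R) k :
  coord_ok G eps k -> (Dc G eps <= k)%N.
Proof.
by move=> ok; rewrite /Dc; case: ex_minnP => m _; apply; apply/asboolP.
Qed.

Theorem mainTheorem16 (R : realType) (n : nat) (G : set 'rV[R]_n) (eps : R)
  (d : nat) :
  orthosymmetric G -> convexR G -> compact G -> 0 < eps ->
  Dc G eps = d.+1 -> (1 <= d)%N ->
  exists u : 'I_(d./2) -> 'rV[R]_n,
    (forall i, G (u i)) /\
    (forall i j, i != j -> dotv (u i) (u j) = 0) /\
    (forall i, eps / Num.sqrt (d%:R) <= enorm (u i)).
Proof.
move=> osG cvG _ eps_gt0 DcG d_ge1.
have d_gt0 : 0 < d%:R :> R by rewrite ltr0n.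
pose c := eps ^+ 2 / d%:R.
have c_gt0 : 0 < c by rewrite divr_gt0 ?exprn_gt0.
have eps2 : eps ^+ 2 = c *+ d by rewrite -mulr_natr divfK ?lt0r_neq0.
have [L [B [hL disjL cardB lightB]]] := heavy_packing G c_gt0 [set: 'I_n].
have sizeL : (d./2 <= size L)%N.
  rewrite leqNgt; apply/negP => small.
  suff /Dc_le : coord_ok G eps #|B| by rewrite DcG; lia.
  exists B; split=> // th Gth; rewrite -finset.setTD; apply/ltW.
  by apply: lt_le_trans (lightB th Gth) _; rewrite eps2 ler_pMn2l //; lia.
have heavyL : {in L, forall S, heavy G c S} by move=> S /hL[].
have [u [Gu orth_u mass_u]] :=
  orthogonal_restrictions osG cvG heavyL disjL sizeL.
exists u; split=> //; split=> // i; apply: enorm_ge.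
  by rewrite divr_ge0 ?sqrtr_ge0 ?ltW.
by rewrite expr_div_n sqr_sqrtr ?ler0n.
Qed.
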